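(* Let $g(t)=\sum_{n\ge0}g_nt^n$ be a formal power series with $g_0=1$ and $f(t)=\sum_{n\ge1}f_nt^n$ a formal power series with $f_1\neq0$. Put $z_0=f_1$, $w_0=g_1$ and define the formal power series \[ Z(t)=\frac{f(t)-z_0t\,g(t)}{f(t)}+z_0=\sum_{k\ge0}z_kt^k,\qquad W(t)=\frac{(1-w_0t)g(t)-1}{f(t)}+w_0=\sum_{k\ge0}w_kt^k . \] Let $J=(J_{i,j})_{i,j\ge0}$ be the infinite matrix with $J_{i,0}=w_i$, $J_{i,1}=z_i$ for all $i\ge0$, $J_{i,i+1}=1$ for $i\ge1$, and all other entries $0$; i.e. \[ J=\begin{bmatrix} w_0&z_0&&&\\ w_1&z_1&1&&\\ w_2&z_2&0&1&\\ w_3&z_3&0&0&1\\ \vdots&\vdots&&&&\ddots\end{bmatrix}. \] Then $[g,f]\,J=\overline{[g,f]}$, where $\overline{[g,f]}$ denotes the matrix obtained from the quasi-Riordan array $[g,f]$ by deleting its first (i.e. $0$th) row.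
   Context: The quasi-Riordan array $[g,f]$ is the infinite lower triangular matrix $(r_{n,k})_{n,k\ge0}$ whose $0$th column has generating function $g$ and whose $k$th column ($k\ge1$) has generating function $t^{k-1}f(t)$, i.e. $r_{n,0}=g_n$ and $r_{n,k}=f_{n-k+1}$ for $k\ge1$ (with $f_j=0$ for $j\le0$). (Under the stated choices of $z_0,w_0$, the expressions defining $Z$ and $W$ are genuine formal power series.) *)

From HB Require Import structures.
From mathcomp Require Import all_boot all_order all_algebra.
Set Implicit Arguments. Unset Strict Implicit. Unset Printing Implicit Defensive.
Import Order.TTheory GRing.Theory Num.Theory.
Local Open Scope ring_scope.

(* Formal power series over a field R, represented by coefficient sequences
   a : nat -> R  (a n = coefficient of t^n). *)

Definition sconst (R : fieldType) (c : R) : nat -> R :=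
  fun n => if n == 0%N then c else 0.
Definition sX (R : fieldType) : nat -> R :=
  fun n => if n == 1%N then 1 else 0.
Definition sadd (R : fieldType) (a b : nat -> R) : nat -> R := fun n => a n + b n.
Definition ssub (R : fieldType) (a b : nat -> R) : nat -> R := fun n => a n - b n.
Definition sscale (R : fieldType) (c : R) (a : nat -> R) : nat -> R := fun n => c * a n.
Definition smul (R : fieldType) (a b : nat -> R) : nat -> R :=
  fun n => \sum_(i < n.+1) a i * b (n - i)%N.

(* The quasi-Riordan array [g,f]: r_{n,0} = g_n, r_{n,k} = f_{n-k+1} (k >= 1),
   with f_j = 0 for j <= 0, i.e. r_{n,k} = 0 for k > n. *)
Definition qRiordan (R : fieldType) (g f : nat -> R) (n k : nat) : R :=
  if k == 0%N then g n else if (k <= n)%N then f (n - k + 1)%N else 0.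

Definition Jmat (R : fieldType) (w z : nat -> R) (i j : nat) : R :=
  if j == 0%N then w i
  else if j == 1%N then z i
  else if (1 <= i)%N && (j == i.+1) then 1 else 0.

(* Product of two infinite matrices A B where A is lower triangular
   (A n j = 0 for j > n), so the sum over j is finite: j <= n. *)
Definition lt_mul (R : fieldType) (A B : nat -> nat -> R) (n k : nat) : R :=
  \sum_(j < n.+1) A n j * B j k.

From HB Require Import structures.
From mathcomp Require Import all_boot all_order all_algebra.
Set Implicit Arguments. Unset Strict Implicit. Unset Printing Implicit Defensive.
Import Order.TTheory GRing.Theory Num.Theory.
Local Open Scope ring_scope.

(* Row n of [g,f] against a column c of J is g_n c_0 + sum_(1 <= j <= n) f_(n+1-j) c_j,
   which is g_n c_0 plus the t^(n+1) coefficient of (c - c_0) f, because f_0 = 0.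
   For c = W this coefficient is g_(n+1) - w_0 g_n, for c = Z it is f_(n+1) - z_0 g_n,
   so these two columns give g_(n+1) and f_(n+1) as soon as W_0 = w_0 and Z_0 = z_0;
   both constant terms are forced by the t^1 coefficients of the defining identities,
   since f has order exactly 1.  The remaining columns of J are shifted unit vectors,
   which move the columns of [g,f] up by one row. *)

Section Products.

Variable R : fieldType.
Implicit Types (a b c : nat -> R) (x : R).

Lemma smulBl a b c n : smul (ssub a b) c n = smul a c n - smul b c n.
Proof. by rewrite /smul -sumrB; apply: eq_bigr => i _; rewrite mulrBl. Qed.

Lemma smul_sscalel x a b n : smul (sscale x a) b n = x * smul a b n.
Proof. by rewrite /smul mulr_sumr; apply: eq_bigr => i _; rewrite mulrA. Qed.

Lemma smul_sconstl x a n : smul (sconst x) a n = x * a n.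
Proof.
rewrite /smul big_ord_recl big1 ?addr0 ?subn0 // => i _.
by rewrite /sconst /= mul0r.
Qed.

Lemma smul_sXl a n : smul (sX R) a n.+1 = a n.
Proof.
rewrite /smul big_ord_recl big_ord_recl big1 /sX /=.
  by rewrite mul0r mul1r add0r addr0 subn1.
by move=> i _; rewrite mul0r.
Qed.

Lemma smul_coefS a b n : b 0%N = 0 ->
  smul a b n.+1 = a 0%N * b n.+1 + \sum_(i < n) a i.+1 * b (n - i)%N.
Proof.
move=> b0; rewrite /smul big_ord_recl big_ord_recr /= subnn b0 mulr0 addr0.
by rewrite subn0.
Qed.

Lemma coef0_eq_of_smul_coef1 c x b : b 0%N = 0 -> b 1%N != 0 ->
  smul (ssub c (sconst x)) b 1 = 0 -> c 0%N = x.
Proof.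
move=> b0 b1 /eqP; rewrite smul_coefS // big_ord0 addr0 mulf_eq0 (negbTE b1) orbF.
by rewrite /ssub /sconst /= subr_eq0 => /eqP.
Qed.

Lemma lt_mul_delta_col (A B : nat -> nat -> R) n j k :
  ((n < j)%N -> A n j = 0) -> (forall i, B i k = (i == j)%:R) ->
  lt_mul A B n k = A n j.
Proof.
move=> Aj Bk; rewrite /lt_mul; case: (ltnP n j) => [nj | jn].
  rewrite Aj // big1 // => i _; rewrite Bk; case: eqP => [ij | _]; last by rewrite mulr0.
  by move: (ltn_ord i); rewrite ij ltnS leqNgt nj.
rewrite (bigD1 (Ordinal (jn : (j < n.+1)%N))) //= Bk eqxx mulr1 big1 ?addr0 // => i ij.
by rewrite Bk; case: eqP => [ij' | _]; [case/eqP: ij; apply: val_inj | rewrite mulr0].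
Qed.

End Products.

Section QuasiRiordanProduct.

Variables (R : fieldType) (g f : nat -> R).
Hypothesis f0 : f 0%N = 0.

Lemma lt_mul_qRiordan (B : nat -> nat -> R) n k :
  lt_mul (qRiordan g f) B n k = g n * B 0%N k + \sum_(i < n) f (n - i)%N * B i.+1 k.
Proof.
rewrite /lt_mul big_ord_recl; congr (_ + _); apply: eq_bigr => i _.
by rewrite /qRiordan /= ltn_ord addn1 subnSK.
Qed.

Lemma lt_mul_qRiordan_col (B : nat -> nat -> R) (c : nat -> R) a n k :
  (forall j, B j k = c j) -> c 0%N = a ->
  lt_mul (qRiordan g f) B n k = g n * a + smul (ssub c (sconst a)) f n.+1.
Proof.
move=> Bc c0; rewrite lt_mul_qRiordan smul_coefS // /ssub /sconst /= Bc c0.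
rewrite subrr mul0r add0r; congr (_ + _); apply: eq_bigr => i _.
by rewrite Bc subr0 mulrC.
Qed.

Lemma qRiordan_eq0 n k : (n < k)%N -> qRiordan g f n k = 0.
Proof. by case: k => // k nk; rewrite /qRiordan /= leqNgt nk. Qed.

Lemma qRiordanSS n k : qRiordan g f n.+1 k.+2 = qRiordan g f n k.+1.
Proof. by rewrite /qRiordan /= ltnS subSS. Qed.

End QuasiRiordanProduct.

Theorem proposition3p1 (R : fieldType) (g f Z W : nat -> R) :
  g 0%N = 1 ->
  f 0%N = 0 ->
  f 1%N != 0 ->
  (* Z = (f - z0 t g)/f + z0 with z0 = f_1, i.e. (Z - z0) f = f - z0 t g *)
  (forall n, smul (ssub Z (sconst (f 1%N))) f n
             = ssub f (smul (sscale (f 1%N) (sX R)) g) n) ->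
  (* W = ((1 - w0 t) g - 1)/f + w0 with w0 = g_1, i.e. (W - w0) f = (1 - w0 t) g - 1 *)
  (forall n, smul (ssub W (sconst (g 1%N))) f n
             = ssub (smul (ssub (sconst 1) (sscale (g 1%N) (sX R))) g) (sconst 1) n) ->
  forall n k : nat,
    lt_mul (qRiordan g f) (Jmat W Z) n k = qRiordan g f n.+1 k.
Proof.
move=> g0 f0 f1 HZ HW n [|[|k]].
- have W0 : W 0%N = g 1%N.
    apply: (coef0_eq_of_smul_coef1 f0 f1).
    rewrite HW /ssub smulBl smul_sconstl smul_sscalel smul_sXl g0 /sconst /=.
    by rewrite mul1r mulr1 subrr subr0.
  rewrite (lt_mul_qRiordan_col g f0 n _ W0) // HW /ssub smulBl smul_sconstl.
  by rewrite smul_sscalel smul_sXl /sconst /qRiordan /= subr0 mul1r mulrC addrC subrK.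
- have Z0 : Z 0%N = f 1%N.
    apply: (coef0_eq_of_smul_coef1 f0 f1).
    by rewrite HZ /ssub smul_sscalel smul_sXl g0 mulr1 subrr.
  rewrite (lt_mul_qRiordan_col g f0 n _ Z0) // HZ /ssub smul_sscalel smul_sXl.
  by rewrite /qRiordan /= subn1 addn1 mulrC addrC subrK.
- rewrite qRiordanSS (lt_mul_delta_col (j := k.+1)) //; first exact: qRiordan_eq0.
  by case=> [|i]; rewrite /Jmat //= !eqSS eq_sym; case: (i == k).
Qed.
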